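(* Let $Q=(I,E)$ be a symmetric quiver with an even number of edges between any two different vertices and an odd number of loops at every vertex, and let $(d,v)\in\mathbb{N}^I\times\mathbb{Z}$. Then $S^d_v$ consists of the partitions $(d_i)_{i=1}^k$ of $d$ such that $v\cdot\underline{d_i}/\underline{d}\in\mathbb{Z}$ for all $1\le i\le k$. In particular, if $\gcd(v,\underline d)=1$ then $S^d_v$ contains only the one-term partition of $d$.
   Context: For $e=(e^i)\in\mathbb{N}^I$, $\underline e=\sum_ie^i$. $R(d)=\bigoplus_{(i\to j)\in E}\mathrm{Hom}(V^i,V^j)$, $\dim V^i=d^i$, $G(d)=\prod GL(V^i)$, Lie algebra $\mathfrak{g}(d)$, diagonal torus $T(d)$ with weights $\beta^i_a$, $\tau_d=\frac1{\underline d}\sum_{i,a}\beta^i_a$. For a cocharacter $\lambda$ of $T(d)$, $n_\lambda=\langle\lambda,\det(R(d)^\vee)^{\lambda>0}\rangle-\langle\lambda,\det(\mathfrak{g}(d)^\vee)^{\lambda>0}\rangle$, where $V^{\lambda>0}$ is the span of weights pairing positively with $\lambda$. A partition of $d$ is a collection of nonzero $d_1,\dots,d_k\in\mathbb{N}^I$ with sum $d$; a cocharacter $\lambda$ has associated partition $(d_j)$ if the $j$-th distinct value of $\langle\lambda,\beta^i_a\rangle$ occurs $d^i_j$ times for each $i$. $S^d_v$ is the set of partitions of $d$ such that $n_\lambda/2+\langle\lambda,v\tau_d\rangle\in\mathbb{Z}$ for every cocharacter $\lambda$ with that associated partition. *)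

From HB Require Import structures.
From mathcomp Require Import all_boot all_order all_algebra.
Set Implicit Arguments. Unset Strict Implicit. Unset Printing Implicit Defensive.
Import Order.TTheory GRing.Theory Num.Theory.
Local Open Scope ring_scope.

Section Quiver.
Variables (I E : finType) (src tgt : E -> I).

Definition nedges (i j : I) : nat := #|[set e : E | (src e == i) && (tgt e == j)]|.

Definition symmetric_quiver : Prop := forall i j : I, nedges i j = nedges j i.

(* underline e = sum_i e^i *)
Definition dsum (e : {ffun I -> nat}) : nat := (\sum_(i : I) e i)%N.

Section Dim.
Variable d : {ffun I -> nat}.

(* index set of the diagonal torus T(d): pairs (i, a), a < d^i *)
Definition idx := {i : I & 'I_(d i)}.

(* characters and cocharacters of T(d), both identified with Z^idx *)
Definition character := idx -> int.
Definition cocharacter := idx -> int.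

Definition pairing (lam : cocharacter) (chi : character) : int :=
  \sum_(x : idx) lam x * chi x.

Definition beta (x : idx) : character := fun y => (x == y)%:R.

Definition wdiff (x y : idx) : character := fun z => beta x z - beta y z.

(* weights (with multiplicity) of R(d)^vee: Hom(V^i,V^j) has weights
   beta^j_b - beta^i_a, so the dual has weights beta^i_a - beta^j_b *)
Definition Rdual_weights : seq character :=
  flatten [seq flatten [seq [seq wdiff (Tagged (fun i => 'I_(d i)) a)
                                        (Tagged (fun i => 'I_(d i)) b)
                             | b <- enum 'I_(d (tgt e))]
                        | a <- enum 'I_(d (src e))]
          | e <- enum E].

(* weights (with multiplicity) of g(d)^vee *)
Definition gdual_weights : seq character :=
  flatten [seq flatten [seq [seq wdiff (Tagged (fun i => 'I_(d i)) a)
                                        (Tagged (fun i => 'I_(d i)) b)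
                             | b <- enum 'I_(d i)]
                        | a <- enum 'I_(d i)]
          | i <- enum I].

(* <lambda, det (V^{lambda>0})> for V with weight multiset ws *)
Definition det_pos_pairing (lam : cocharacter) (ws : seq character) : int :=
  \sum_(w <- ws | 0 < pairing lam w) pairing lam w.

Definition n_lambda (lam : cocharacter) : int :=
  det_pos_pairing lam Rdual_weights - det_pos_pairing lam gdual_weights.

(* <lambda, v tau_d>, tau_d = (1/underline d) sum_{i,a} beta^i_a *)
Definition pairing_vtau (v : int) (lam : cocharacter) : rat :=
  \sum_(x : idx) (lam x)%:~R * (v%:~R / (dsum d)%:R).

Definition is_partition (s : seq {ffun I -> nat}) : Prop :=
  (forall p, p \in s -> exists i, (0 < p i)%N) /\
  (forall i : I, (\sum_(p <- s) p i)%N = d i).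

Definition distinct_values (lam : cocharacter) : seq int :=
  sort (fun a b : int => a <= b) (undup [seq lam x | x <- enum {: idx}]).

Definition assoc_partition (lam : cocharacter) (s : seq {ffun I -> nat}) : Prop :=
  size (distinct_values lam) = size s /\
  forall (j : nat) (i : I), (j < size s)%N ->
    #|[set a : 'I_(d i) | lam (Tagged (fun i => 'I_(d i)) a)
                          == nth 0 (distinct_values lam) j]|
    = nth [ffun=> 0%N] s j i.

Definition in_S (v : int) (s : seq {ffun I -> nat}) : Prop :=
  is_partition s /\
  forall lam : cocharacter, assoc_partition lam s ->
    ((n_lambda lam)%:~R / 2 + pairing_vtau v lam : rat) \is a Num.int.
End Dim.
End Quiver.

(** The parity hypotheses make [n_lambda] even for every cocharacter: grouping
    the weights of [R(d)^vee] and [g(d)^vee] by the pair of vertices they join,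
    [n_lambda] is a sum of the contributions of [Hom(V^i, V^j)] with
    multiplicity [#edges(i -> j) - [i = j]], which is always even.  So the
    defining condition of [S^d_v] reduces to [<lambda, v tau_d> \in Z], and
    [<lambda, v tau_d> = sum_j c_j v dim(d_j) / dim(d)] when [lambda] takes the
    value [c_j] on the [j]-th block.  Every [v dim(d_j) / dim(d)] integral makes
    this an integer; conversely, comparing the block values [2j] and
    [2j + [j = m]] isolates the [m]-th summand.  When [v] and [dim(d)] are
    coprime, [dim(d)] divides each [dim(d_j)], so there is only one part. *)

From HB Require Import structures.
From mathcomp Require Import all_boot all_order all_algebra.
From mathcomp Require Import zify ring.
Set Implicit Arguments. Unset Strict Implicit. Unset Printing Implicit Defensive.
Import Order.TTheory GRing.Theory Num.Theory.
Local Open Scope ring_scope.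

Lemma sum_nat_indicator (T : finType) (P : pred T) :
  \sum_(x : T) (P x)%:R = #|[set x | P x]|%:R :> int.
Proof.
rewrite -sum1dep_card natr_sum [RHS]big_mkcond /=.
by apply: eq_bigr => x _; case: (P x).
Qed.

Lemma card_ord_nth (T : Type) (x0 : T) (s : seq T) (P : pred T) (n : nat) :
  size s = n -> #|[set i : 'I_n | P (nth x0 s i)]| = count P s.
Proof. by move=> <-; rewrite -sum1dep_card -sum1_count (big_nth x0) big_mkord. Qed.

Section Torus.
Variables (I : finType) (d : {ffun I -> nat}).

Definition tagI (i : I) (a : 'I_(d i)) : idx d := Tagged (fun i => 'I_(d i)) a.

Lemma big_idx (R : nmodType) (F : idx d -> R) :
  \sum_(x : idx d) F x = \sum_(i : I) \sum_(a : 'I_(d i)) F (tagI a).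
Proof.
rewrite [RHS](sig_big_dep xpredT (fun _ _ => true) (fun i a => F (tagI a))) /=.
by apply: eq_bigr => -[i a].
Qed.

Lemma pairing_wdiff (lam : cocharacter d) (x y : idx d) :
  pairing lam (wdiff x y) = lam x - lam y.
Proof.
have pairing_beta z : pairing lam (beta z) = lam z.
  rewrite /pairing /beta (bigD1 z) //= eqxx mulr1 big1 ?addr0 // => w /negbTE.
  by rewrite eq_sym => ->; rewrite mulr0.
by rewrite -!pairing_beta /pairing -sumrB; apply: eq_bigr => z _; rewrite mulrBr.
Qed.

End Torus.

Section Parity.
Variables (I E : finType) (src tgt : E -> I) (d : {ffun I -> nat}).
Variable lam : cocharacter d.

Lemma det_pos_pairingE (ws : seq (character d)) :
  det_pos_pairing lam ws = \sum_(w <- ws) Num.max 0 (pairing lam w).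
Proof. by rewrite /det_pos_pairing big_mkcond. Qed.

Definition hom_pos_pairing (i j : I) : int :=
  \sum_(a : 'I_(d i)) \sum_(b : 'I_(d j)) Num.max 0 (lam (tagI a) - lam (tagI b)).

Lemma det_pos_pairing_hom (i j : I) :
  det_pos_pairing lam (flatten [seq [seq wdiff (tagI a) (tagI b) | b <- enum 'I_(d j)]
                               | a <- enum 'I_(d i)])
  = hom_pos_pairing i j.
Proof.
rewrite det_pos_pairingE big_flatten big_map big_enum; apply: eq_bigr => a _.
by rewrite big_map big_enum; apply: eq_bigr => b _; rewrite pairing_wdiff.
Qed.

Lemma det_pos_pairing_Rdual :
  det_pos_pairing lam (Rdual_weights src tgt d)
  = \sum_(p : I * I) hom_pos_pairing p.1 p.2 *+ nedges src tgt p.1 p.2.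
Proof.
rewrite det_pos_pairingE big_flatten big_map big_enum /=.
under eq_bigr do rewrite -det_pos_pairingE det_pos_pairing_hom.
rewrite (partition_big (fun e => (src e, tgt e)) xpredT) //=.
apply: eq_bigr => -[i j] _; rewrite -sumr_const /nedges.
rewrite [RHS](eq_bigl (fun e => (src e, tgt e) == (i, j))) => [|e]; last first.
  by rewrite inE xpair_eqE.
by apply: eq_bigr => e /eqP [<- <-].
Qed.

Lemma det_pos_pairing_gdual :
  det_pos_pairing lam (gdual_weights d)
  = \sum_(p : I * I) hom_pos_pairing p.1 p.2 *+ (p.1 == p.2).
Proof.
rewrite det_pos_pairingE big_flatten big_map big_enum /=.
under eq_bigr do rewrite -det_pos_pairingE det_pos_pairing_hom.
rewrite -(pair_bigA _ (fun i j => hom_pos_pairing i j *+ (i == j))) /=.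
apply: eq_bigr => i _; rewrite (bigD1 i) //= eqxx mulr1n big1 ?addr0 // => j.
by rewrite eq_sym => /negbTE ->; rewrite mulr0n.
Qed.

Hypothesis odd_nedges : forall i j : I, odd (nedges src tgt i j) = (i == j).

Lemma n_lambda_double :
  n_lambda src tgt lam
  = (\sum_(p : I * I) hom_pos_pairing p.1 p.2 *+ (nedges src tgt p.1 p.2)./2) *+ 2.
Proof.
rewrite /n_lambda det_pos_pairing_Rdual det_pos_pairing_gdual -sumrB -sumrMnl.
apply: eq_bigr => -[i j] _ /=.
rewrite -{1}(odd_double_half (nedges src tgt i j)) odd_nedges mulrnDr addrC addKr.
by rewrite -mul2n mulnC mulrnA.
Qed.

Lemma half_n_lambda_int : ((n_lambda src tgt lam)%:~R / 2 : rat) \is a Num.int.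
Proof.
by rewrite n_lambda_double rmorphMn -mulr_natr mulfK ?intr_int ?pnatr_eq0.
Qed.

End Parity.

Section TauPairing.
Variables (I : finType) (d : {ffun I -> nat}) (v : int).

Lemma sum_cocharacter_assoc (lam : cocharacter d) (s : seq {ffun I -> nat}) :
  assoc_partition lam s ->
  \sum_(x : idx d) lam x
  = \sum_(j < size s) (dsum (nth [ffun=> 0%N] s j))%:R * nth 0 (distinct_values lam) j.
Proof.
case=> size_s card_s; set c := distinct_values lam.
have uniq_c : uniq c by rewrite sort_uniq undup_uniq.
have lam_in_c x : lam x \in c.
  by rewrite mem_sort mem_undup map_f ?mem_enum.
transitivity (\sum_(x : idx d) \sum_(y <- c) (lam x == y)%:R * y).
  apply: eq_bigr => x _; rewrite (bigD1_seq (lam x)) //= eqxx mul1r.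
  by rewrite big1 ?addr0 // => y; rewrite eq_sym => /negbTE ->; rewrite mul0r.
rewrite exchange_big (big_nth 0) big_mkord -size_s; apply: eq_bigr => j _.
rewrite -mulr_suml big_idx /dsum natr_sum; congr (_ * _); apply: eq_bigr => i _.
by rewrite sum_nat_indicator card_s // -size_s.
Qed.

Lemma pairing_vtauE (lam : cocharacter d) :
  pairing_vtau v lam = (\sum_(x : idx d) lam x)%:~R * (v%:~R / (dsum d)%:R).
Proof. by rewrite /pairing_vtau -mulr_suml; congr (_ * _); rewrite rmorph_sum. Qed.

Lemma pairing_vtau_assoc (lam : cocharacter d) (s : seq {ffun I -> nat}) :
  assoc_partition lam s ->
  pairing_vtau v lam
  = \sum_(j < size s) (nth 0 (distinct_values lam) j)%:~R
      * (v%:~R * (dsum (nth [ffun=> 0%N] s j))%:R / (dsum d)%:R).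
Proof.
move=> lam_s; rewrite pairing_vtauE (sum_cocharacter_assoc lam_s).
rewrite rmorph_sum mulr_suml; apply: eq_bigr => j _.
by rewrite rmorphM /= rmorph_nat; ring.
Qed.

End TauPairing.

Section BlockCocharacter.
Variables (I : finType) (d : {ffun I -> nat}) (s : seq {ffun I -> nat}).
Hypothesis s_part : is_partition d s.

Let part (j : nat) : {ffun I -> nat} := nth [ffun=> 0%N] s j.

(* [block a] is the part of [s] receiving the [a]-th basis vector of [V^i];
   the parts take consecutive runs of basis vectors. *)
Definition block_seq (i : I) : seq nat :=
  flatten [seq nseq (part j i) j | j <- iota 0 (size s)].

Definition block (i : I) (a : 'I_(d i)) : nat := nth 0%N (block_seq i) a.

Lemma size_block_seq (i : I) : size (block_seq i) = d i.
Proof.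
rewrite size_flatten /shape -map_comp.
under eq_map do rewrite /= size_nseq.
by rewrite -(proj2 s_part) sumnE big_map [RHS](big_nth [ffun=> 0%N]) /index_iota subn0.
Qed.

Lemma card_block (i : I) (j : nat) :
  #|[set a : 'I_(d i) | block a == j]| = if (j < size s)%N then part j i else 0%N.
Proof.
rewrite (card_ord_nth 0%N (pred1 j) (size_block_seq i)) count_flatten -map_comp.
under eq_map do rewrite /= count_nseq.
rewrite sumnE big_map; case: ifP => [j_lt|j_ge].
  rewrite (bigD1_seq j) ?mem_iota ?iota_uniq //= eqxx mul1n big1 ?addn0 //.
  by move=> j' /negbTE; rewrite eq_sym => ->.
rewrite big1_seq // => j' /andP [_]; rewrite mem_iota /= => j'_lt.
by case: eqP => [eq_j'|]; rewrite // -eq_j' j'_lt in j_ge.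
Qed.

Lemma block_lt (i : I) (a : 'I_(d i)) : (block a < size s)%N.
Proof.
have : block a \in block_seq i by rewrite mem_nth ?size_block_seq.
case/flattenP => js /mapP [j]; rewrite mem_iota => /andP [_ j_lt] ->.
by rewrite mem_nseq => /andP [_ /eqP ->].
Qed.

Lemma block_surj (j : nat) : (j < size s)%N -> exists i (a : 'I_(d i)), block a = j.
Proof.
move=> j_lt; have [i part_i] := proj1 s_part (part j) (mem_nth _ j_lt).
have : (0 < #|[set a : 'I_(d i) | block a == j]|)%N by rewrite card_block j_lt.
by case/card_gt0P => a; rewrite inE => /eqP <-; exists i, a.
Qed.

Definition block_cochar (c : nat -> int) : cocharacter d :=
  fun x => c (block (tagged x)).

Variable c : nat -> int.
Hypothesis c_inc : {homo c : a b / (a < b)%N >-> a < b}.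

Lemma distinct_values_block_cochar :
  distinct_values (block_cochar c) = map c (iota 0 (size s)).
Proof.
have c_inj : injective c := inc_inj (le_mono c_inc).
have sorted_c : sorted (fun a b : int => a <= b) (map c (iota 0 (size s))).
  by rewrite sorted_map; apply: sub_sorted (iota_ltn_sorted 0 _) => a b /c_inc/ltW.
apply: (sorted_eq (leT := fun a b : int => a <= b) le_trans le_anti _ sorted_c).
  exact: (sort_sorted le_total).
rewrite perm_sort; apply: uniq_perm.
- exact: undup_uniq.
- by rewrite (map_inj_uniq c_inj) iota_uniq.
move=> y; rewrite mem_undup; apply/mapP/mapP => [[x _ ->]|[j]].
  by exists (block (tagged x)); rewrite // mem_iota block_lt.
rewrite mem_iota => /andP [_ /block_surj [i [a <-]]] ->.
by exists (tagI a); rewrite ?mem_enum.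
Qed.

Lemma assoc_partition_block_cochar : assoc_partition (block_cochar c) s.
Proof.
have c_inj : injective c := inc_inj (le_mono c_inc).
rewrite /assoc_partition distinct_values_block_cochar size_map size_iota.
split=> // j i j_lt; rewrite (nth_map 0%N) ?size_iota // nth_iota //.
have := card_block i j; rewrite j_lt => <-.
by apply: eq_card => a; rewrite !inE (inj_eq c_inj).
Qed.

Lemma pairing_vtau_block_cochar (v : int) :
  pairing_vtau v (block_cochar c)
  = \sum_(j < size s) (c j)%:~R * (v%:~R * (dsum (part j))%:R / (dsum d)%:R).
Proof.
rewrite (pairing_vtau_assoc v assoc_partition_block_cochar).
apply: eq_bigr => j _; rewrite distinct_values_block_cochar.
by rewrite (nth_map 0%N) ?size_iota // nth_iota.
Qed.

End BlockCocharacter.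

Lemma part_ratio_int_of_pairing_vtau_int (I : finType) (d : {ffun I -> nat}) (v : int)
    (s : seq {ffun I -> nat}) :
  is_partition d s ->
  (forall lam : cocharacter d, assoc_partition lam s -> pairing_vtau v lam \is a Num.int) ->
  forall p, p \in s -> (v%:~R * (dsum p)%:R / (dsum d)%:R : rat) \is a Num.int.
Proof.
move=> s_part vtau_int p p_in; set m := index p s.
have m_lt : (m < size s)%N by rewrite index_mem.
pose c j : int := (2 * j)%N.
pose c' j : int := (2 * j + (j == m))%N.
have c_inc : {homo c : a b / (a < b)%N >-> a < b}.
  by move=> a b a_lt; rewrite ltz_nat; lia.
have c'_inc : {homo c' : a b / (a < b)%N >-> a < b}.
  by move=> a b a_lt; rewrite ltz_nat; case: (a == m); case: (b == m); lia.
have c'_sub_c j : c' j - c j = (j == m)%:R.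
  by rewrite /c /c' PoszD addrC addKr; case: (j == m).
have := rpredB (vtau_int _ (assoc_partition_block_cochar s_part c'_inc))
               (vtau_int _ (assoc_partition_block_cochar s_part c_inc)).
rewrite (pairing_vtau_block_cochar s_part c'_inc) (pairing_vtau_block_cochar s_part c_inc).
rewrite -sumrB; under eq_bigr do rewrite -mulrBl -rmorphB c'_sub_c.
rewrite (bigD1 (Ordinal m_lt)) //= eqxx mul1r nth_index // big1 ?addr0 // => j.
by rewrite -val_eqE /= => /negbTE ->; rewrite mul0r.
Qed.

Section InS.
Variables (I E : finType) (src tgt : E -> I).
Hypothesis odd_nedges : forall i j : I, odd (nedges src tgt i j) = (i == j).
Variables (d : {ffun I -> nat}) (v : int).

Lemma in_S_pairing_vtau (s : seq {ffun I -> nat}) :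
  in_S src tgt d v s <->
  is_partition d s /\
  forall lam : cocharacter d, assoc_partition lam s -> pairing_vtau v lam \is a Num.int.
Proof.
by split=> -[s_part vtau_int]; split=> // lam /vtau_int;
  rewrite rpredDl // half_n_lambda_int.
Qed.

Lemma in_S_iff_part_ratio_int (s : seq {ffun I -> nat}) :
  in_S src tgt d v s <->
  is_partition d s /\
  forall p, p \in s -> (v%:~R * (dsum p)%:R / (dsum d)%:R : rat) \is a Num.int.
Proof.
rewrite in_S_pairing_vtau; split=> -[s_part s_int]; split=> //.
  exact: part_ratio_int_of_pairing_vtau_int.
move=> lam lam_s; rewrite (pairing_vtau_assoc v lam_s); apply: rpred_sum => j _.
by rewrite rpredM ?intr_int ?s_int ?mem_nth.
Qed.

End InS.

Lemma dvdn_of_ratio_int (v : int) (D P : nat) :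
  (0 < D)%N -> coprime `|v| D ->
  (v%:~R * P%:R / D%:R : rat) \is a Num.int -> (D %| P)%N.
Proof.
move=> D_gt0 coprime_vD /intrP [z vP_eq].
have vP_zD : v * P%:R = z * D%:R.
  apply: (@intr_inj rat); rewrite !rmorphM /= !rmorph_nat -vP_eq mulfVK //.
  by rewrite pnatr_eq0 -lt0n.
rewrite coprime_sym in coprime_vD; rewrite -(Gauss_dvdr _ coprime_vD).
by have := congr1 absz vP_zD; rewrite !abszM !natz /= => ->; rewrite dvdn_mull.
Qed.

Section Partition.
Variables (I : finType) (d : {ffun I -> nat}).

Lemma dsum_gt0 (p : {ffun I -> nat}) (i : I) : (0 < p i)%N -> (0 < dsum p)%N.
Proof. by move=> p_i; apply: leq_trans p_i _; rewrite /dsum (bigD1 i) ?leq_addr. Qed.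

Lemma is_partition_single : (0 < dsum d)%N -> is_partition d [:: d].
Proof.
move=> d_gt0; split=> [p|i]; last by rewrite big_seq1.
rewrite inE => /eqP ->; apply/existsP; apply: contraLR d_gt0.
rewrite negb_exists -leqNgt leqn0 => /forallP d0; rewrite /dsum big1 // => i _.
by apply/eqP; rewrite -leqn0 leqNgt d0.
Qed.

Lemma sum_dsum_partition (s : seq {ffun I -> nat}) :
  is_partition d s -> (\sum_(p <- s) dsum p)%N = dsum d.
Proof. by case=> _ sum_s; rewrite /dsum exchange_big; apply: eq_bigr. Qed.

Lemma partition_dvd_single (s : seq {ffun I -> nat}) :
  (0 < dsum d)%N -> is_partition d s ->
  (forall p, p \in s -> dsum d %| dsum p)%N -> s = [:: d].
Proof.
move=> d_gt0 s_part dvd_s.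
have dsum_ge p : p \in s -> (dsum d <= dsum p)%N.
  move=> p_in; have [i /dsum_gt0 p_gt0] := proj1 s_part p p_in.
  exact: dvdn_leq p_gt0 (dvd_s p p_in).
have := sum_dsum_partition s_part.
case: s s_part dvd_s dsum_ge => [|p [|q s']] s_part _ dsum_ge.
- by rewrite big_nil => d0; rewrite -d0 in d_gt0.
- by move=> _; congr [:: _]; apply/ffunP => i; rewrite -(proj2 s_part i) big_seq1.
have := dsum_ge q; rewrite inE mem_head orbT => /(_ isT).
have := dsum_ge p (mem_head _ _).
by rewrite !big_cons; lia.
Qed.

End Partition.

Unset Implicit Arguments.

Theorem proposition8p5 (I E : finType) (src tgt : E -> I)
  (Hsym : symmetric_quiver src tgt)
  (Heven : forall i j : I, i != j -> ~~ odd (nedges src tgt i j))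
  (Hloops : forall i : I, odd (nedges src tgt i i))
  (d : {ffun I -> nat}) (v : int)
  (Hd : (0 < dsum d)%N) :
  (forall s : seq {ffun I -> nat},
     in_S src tgt d v s <->
     (is_partition d s /\
      forall p, p \in s ->
        ((v%:~R * (dsum p)%:R / (dsum d)%:R : rat) \is a Num.int)))
  /\
  ((gcdn `|v|%N (dsum d) = 1)%N ->
   forall s : seq {ffun I -> nat}, in_S src tgt d v s <-> s = [:: d]).
Proof.
have odd_nedges i j : odd (nedges src tgt i j) = (i == j).
  by case: eqP => [->|/eqP /Heven /negbTE //]; exact: Hloops.
have in_SE := in_S_iff_part_ratio_int odd_nedges d v.
split=> // coprime_vd s; rewrite in_SE; split=> [[s_part s_int]|->].
  apply: partition_dvd_single => // p /s_int.
  by apply: dvdn_of_ratio_int; rewrite // /coprime coprime_vd.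
split; first exact: is_partition_single.
by move=> p; rewrite inE => /eqP ->; rewrite mulfK ?intr_int // pnatr_eq0 -lt0n.
Qed.
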